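(* Let $\mathcal{H}$ be a finite-dimensional complex Hilbert space, let $P$ be a traceless Hermitian operator with $P^2=I$, let $H$ be a Hamiltonian (Hermitian operator) with $[H,P]=0$, and let $A$ and $B$ be Hermitian operators satisfying $\{A,P\} = \{B,P\} = 0$. Let $\rho = |\Psi\rangle\langle\Psi|$ where $|\Psi\rangle$ is a (normalized) eigenstate of $H$ with $P|\Psi\rangle = p|\Psi\rangle$, $p\in\{+1,-1\}$. Then for every real $t$, $$C(A,B,t) = p\, Q\!\left(\rho, \tfrac{P+A}{\sqrt{2}}, B(t)\right) + \mathrm{i}\, Q\!\left(\rho, \tfrac{I+\mathrm{i}A}{\sqrt{2}}, B(t)\right).$$
   Context: For an operator $O$, $O(t) := e^{\mathrm{i}Ht} O e^{-\mathrm{i}Ht}$. The two-point time correlator is $C(A,B,t) := \mathrm{Tr}[\rho\, A\, B(t)]$. The quench function is $Q(\rho,K,M) := \mathrm{Tr}(K\rho K^\dagger M)$ for operators $K$, $M$. $\{X,Y\} = XY+YX$. *)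

From HB Require Import structures.
From mathcomp Require Import all_boot all_order all_algebra.
From mathcomp Require Import all_classical all_reals all_analysis.
From mathcomp Require Import complex.
Set Implicit Arguments. Unset Strict Implicit. Unset Printing Implicit Defensive.
Import Order.TTheory GRing.Theory Num.Theory.
Import numFieldNormedType.Exports.
Local Open Scope ring_scope.
Local Open Scope complex_scope.

(* Operators on an n-dimensional complex Hilbert space C^n are n x n matrices
   over C := R[i], R a real number field (realType). *)

Definition adj (R : realType) (m n : nat) (M : 'M[R[i]]_(m, n)) : 'M[R[i]]_(n, m) :=
  map_mx Num.conj (trmx M).

Lemma adjE (R : realType) (m n : nat) (M : 'M[R[i]]_(m, n)) :
  adj M = (M ^t Num.conj)%sesqui.
Proof. by []. Qed.

Definition acomm (R : realType) (n : nat) (X Y : 'M[R[i]]_n) : 'M[R[i]]_n :=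
  X *m Y + Y *m X.

Definition expmx (R : realType) (n : nat) (M : 'M[R[i]]_n) : 'M[R[i]]_n :=
  limn [series (((k`!)%:R : R[i])^-1 *: M ^+ k)]_k.

Definition evol (R : realType) (n : nat) (H : 'M[R[i]]_n) (t : R)
  (O : 'M[R[i]]_n) : 'M[R[i]]_n :=
  expmx (('i * t%:C) *: H) *m O *m expmx ((- ('i * t%:C)) *: H).

Definition corr (R : realType) (n : nat) (H rho A B : 'M[R[i]]_n) (t : R) : R[i] :=
  \tr (rho *m A *m evol H t B).

Definition quench (R : realType) (n : nat) (rho K M : 'M[R[i]]_n) : R[i] :=
  \tr (K *m rho *m adj K *m M).

(* Hermitian (self-adjoint) operator: the library's [hermitianmx] predicate
   with eps = false and theta = complex conjugation, i.e. M = M^T conj. *)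
Definition hermitian_op (R : realType) (n : nat) (M : 'M[R[i]]_n) : bool :=
  M \is hermitianmx _ false Num.conj.

From mathcomp Require Import all_boot all_algebra.
From mathcomp Require Import all_classical all_reals all_analysis.
From mathcomp Require Import complex ring.
Set Implicit Arguments. Unset Strict Implicit. Unset Printing Implicit Defensive.
Import GRing.Theory Num.Theory.
Import numFieldNormedType.Exports.
Local Open Scope ring_scope.
Local Open Scope complex_scope.
Local Open Scope classical_set_scope.

(* Since H commutes with P, so do the propagators exp(+-iHt); hence B(t), like B,
   anticommutes with P.  For an eigenvector psi of P with eigenvalue p = +-1, the
   expectation <X> of any X anticommuting with P vanishes, as it equals both p<X>
   and -p<X>.  Expanding the two quenches, <B(t)> and <A B(t) A> drop out and,
   with a = <B(t) A> and b = <A B(t)>, one gets Q1 = p(a + b)/2 and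
   Q2 = i(a - b)/2, so that p Q1 + i Q2 = b = C(A, B, t). *)

Section MatrixLimits.
Variable K : numFieldType.

Lemma limn_dvg_mx m n (u : nat -> 'M[K]_(m, n)) : ~ cvgn u -> limn u = 0.
Proof.
move=> ncu; rewrite /lim /lim_in; case: xgetP => [l _ /cvgP //|_].
by apply/matrixP => i j; rewrite !mxE.
Qed.

Lemma linear_mx_continuous m n p q
    (f : {linear 'M[K]_(m, n) -> 'M[K]_(p, q)}) : continuous f.
Proof.
have -> : (f : 'M[K]_(m, n) -> 'M[K]_(p, q)) =
    fun X => \sum_i \sum_j X i j *: f (delta_mx i j).
  apply/funext => X; rewrite {1}(matrix_sum_delta X) linear_sum.
  by apply: eq_bigr => i _; rewrite linear_sum; apply: eq_bigr => j _; rewrite linearZ.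
apply: continuous_big => [|i _]; first exact: add_continuous.
apply: continuous_big => [|j _ X]; first exact: add_continuous.
exact/continuousZr_tmp/coord_continuous.
Qed.

Lemma comm_limn n (P : 'M[K]_n) (u : nat -> 'M[K]_n) :
  (forall k, GRing.comm P (u k)) -> GRing.comm P (limn u).
Proof.
(* No convergence is assumed: a divergent [limn u] is the junk value 0. *)
move=> Pu; have [cu|ncu] := pselect (cvgn u); last first.
  by rewrite limn_dvg_mx // /GRing.comm mulr0 mul0r.
have Pul : P *m u k @[k --> \oo] --> P *m limn u.
  by apply: continuous_cvg cu; exact: (@linear_mx_continuous _ _ _ _ (mulmx P)).
have ulP : mulmxr P (u k) @[k --> \oo] --> mulmxr P (limn u).
  by apply: continuous_cvg cu; exact: (@linear_mx_continuous _ _ _ _ (mulmxr P)).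
have uPE : (fun k => P *m u k) = fun k => mulmxr P (u k) by apply/funext => k; exact: Pu.
apply: (cvg_unique _ Pul); first exact: (@norm_hausdorff K 'M[K]_n).
by rewrite /= uPE.
Qed.

End MatrixLimits.

Lemma comm_scalemx (K : comPzRingType) n (P X : 'M[K]_n) a :
  GRing.comm P X -> GRing.comm P (a *: X).
Proof. by rewrite /GRing.comm -!mulmxE -scalemxAr -scalemxAl => ->. Qed.

Lemma comm_expmx (R : realType) n (P M : 'M[R[i]]_n) :
  GRing.comm P M -> GRing.comm P (expmx M).
Proof.
move=> PM; apply: comm_limn => k; apply: commr_sum => j _.
exact/comm_scalemx/commrX.
Qed.

Lemma anticomm_conj_comm (T : pzRingType) (P U V B : T) :
  GRing.comm P U -> GRing.comm P V -> P * B = - (B * P) ->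
  P * (U * B * V) = - (U * B * V * P).
Proof.
move=> PU PV PB.
by rewrite !mulrA PU -(mulrA U P B) PB mulrN mulNr -!mulrA PV !mulrA.
Qed.

Lemma anticomm_evol (R : realType) n (H P B : 'M[R[i]]_n) (t : R) :
  H *m P = P *m H -> P *m B = - (B *m P) -> P *m evol H t B = - (evol H t B *m P).
Proof.
move=> HP PB; apply: anticomm_conj_comm => //;
  by apply/comm_expmx/comm_scalemx; rewrite /GRing.comm -!mulmxE HP.
Qed.

Definition braket (K : comPzRingType) n (w : 'rV[K]_n) (X : 'M[K]_n) (v : 'cV[K]_n)
  : K :=
  \tr (w *m X *m v).

Section BraketLinear.
Variables (K : comPzRingType) (n : nat) (w : 'rV[K]_n) (v : 'cV[K]_n).

Lemma braketD X Y : braket w (X + Y) v = braket w X v + braket w Y v.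
Proof. by rewrite /braket mulmxDr mulmxDl mxtraceD. Qed.

Lemma braketZ a X : braket w (a *: X) v = a * braket w X v.
Proof. by rewrite /braket -scalemxAr -scalemxAl mxtraceZ. Qed.

Lemma braketN X : braket w (- X) v = - braket w X v.
Proof. by rewrite -scaleN1r braketZ mulN1r. Qed.

Lemma mxtrace_outer X : \tr (v *m w *m X) = braket w X v.
Proof. by rewrite /braket -mulmxA mxtrace_mulC. Qed.

End BraketLinear.

Section ParityEigenvector.
Variables (K : numFieldType) (n : nat) (P : 'M[K]_n).
Variables (w : 'rV[K]_n) (v : 'cV[K]_n) (p : K).
Hypotheses (Pv : P *m v = p *: v) (wP : w *m P = p *: w) (p_neq0 : p != 0).

Lemma braket_mulPl X : braket w (P *m X) v = p * braket w X v.
Proof. by rewrite /braket mulmxA wP -!scalemxAl mxtraceZ. Qed.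

Lemma braket_mulPr X : braket w (X *m P) v = p * braket w X v.
Proof. by rewrite /braket -!mulmxA Pv -!scalemxAr mxtraceZ. Qed.

Lemma braket_anticomm X : P *m X = - (X *m P) -> braket w X v = 0.
Proof.
move=> PX; have := braket_mulPl X; rewrite PX braketN braket_mulPr => /eqP.
rewrite eq_sym -addr_eq0 -mulr2n mulrn_eq0 mulf_eq0 (negbTE p_neq0) /=.
by move/eqP.
Qed.

Variables (A M : 'M[K]_n).
Hypotheses (PA : P *m A = - (A *m P)) (PM : P *m M = - (M *m P)).

Lemma braket_AMA : braket w (A *m M *m A) v = 0.
Proof.
apply: braket_anticomm.
by rewrite !mulmxA PA mulNmx -!mulmxA PM mulmxN opprK -!mulmxA PA !mulmxN.
Qed.

Lemma braket_sandwich_P :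
  braket w ((P + A) *m M *m (P + A)) v =
  p * (braket w (M *m A) v + braket w (A *m M) v).
Proof.
rewrite !mulmxDl !mulmxDr !braketD braket_AMA !braket_mulPr -[P *m M *m A]mulmxA.
rewrite !braket_mulPl (braket_anticomm PM).
ring.
Qed.

Lemma braket_sandwich_1 z :
  braket w ((1%:M - z *: A) *m M *m (1%:M + z *: A)) v =
  z * (braket w (M *m A) v - braket w (A *m M) v).
Proof.
rewrite mulmxDr mulmx1 !mulmxBl !mul1mx -!scalemxAl -!scalemxAr.
rewrite !braketD !braketN !braketZ braket_AMA (braket_anticomm PM).
ring.
Qed.

End ParityEigenvector.

Section Adjoint.
Variable R : realType.

Lemma adjM m n k (X : 'M[R[i]]_(m, n)) (Y : 'M[R[i]]_(n, k)) :
  adj (X *m Y) = adj Y *m adj X.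
Proof. by rewrite /adj trmx_mul map_mxM. Qed.

Lemma adjD m n (X Y : 'M[R[i]]_(m, n)) : adj (X + Y) = adj X + adj Y.
Proof. by rewrite /adj linearD map_mxD. Qed.

Lemma adjZ m n (a : R[i]) (X : 'M[R[i]]_(m, n)) : adj (a *: X) = Num.conj a *: adj X.
Proof. by rewrite /adj linearZ map_mxZ. Qed.

Lemma adj1 n : adj (1%:M : 'M[R[i]]_n) = 1%:M.
Proof. by rewrite /adj trmx1 map_mx1. Qed.

Lemma adj_hermitian n (X : 'M[R[i]]_n) : hermitian_op X -> adj X = X.
Proof. by move=> /is_hermitianmxP {2}->; rewrite expr0 scale1r. Qed.

Lemma adj_eigenvector n (P : 'M[R[i]]_n) (v : 'cV_n) (p : R[i]) :
  hermitian_op P -> P *m v = p *: v -> Num.conj p = p -> adj v *m P = p *: adj v.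
Proof. by move=> hP Pv cp; rewrite -[P in _ *m P]adj_hermitian // -adjM Pv adjZ cp. Qed.

Lemma quench_braket n (v : 'cV[R[i]]_n) (K M : 'M[R[i]]_n) :
  quench (v *m adj v) K M = braket (adj v) (adj K *m M *m K) v.
Proof.
rewrite /quench /braket -!mulmxA mxtrace_mulC -!mulmxA.
by rewrite mxtrace_mulC -!mulmxA.
Qed.

End Adjoint.

Lemma sandwich_combination (K : comNzRingType) (p z c a b : K) :
  p * p = 1 -> z * z = -1 -> c * c *+ 2 = 1 ->
  p * (c * (c * (p * (a + b)))) + z * (c * (c * (z * (a - b)))) = b.
Proof.
move=> p2 z2 c2; transitivity (c * c *+ 2 * b); last by rewrite c2 mul1r.
transitivity (c * c * (p * p) * (a + b) + c * c * (z * z) * (a - b)); first ring.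
by rewrite p2 z2; ring.
Qed.

Theorem theorem1 (R : realType) (n : nat) (P H A B : 'M[R[i]]_n)
    (psi : 'cV[R[i]]_n) (E p : R[i]) :
  hermitian_op P -> \tr P = 0 -> P *m P = 1%:M ->
  hermitian_op H -> H *m P = P *m H ->
  hermitian_op A -> hermitian_op B -> acomm A P = 0 -> acomm B P = 0 ->
  adj psi *m psi = 1%:M ->
  H *m psi = E *: psi ->
  P *m psi = p *: psi -> (p = 1 \/ p = -1) ->
  let rho := psi *m adj psi in
  forall t : R,
    corr H rho A B t =
      p * quench rho (((Num.sqrt (2 : R))%:C)^-1 *: (P + A)) (evol H t B)
      + 'i * quench rho (((Num.sqrt (2 : R))%:C)^-1 *: (1%:M + 'i *: A)) (evol H t B).
Proof.
move=> hP _ _ _ HP hA _ AP BP _ _ Pv p_pm1 rho t.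
have anticomm X : acomm X P = 0 -> P *m X = - (X *m P).
  by rewrite /acomm => /eqP; rewrite addrC addr_eq0 => /eqP.
have PM := anticomm_evol t HP (anticomm _ BP).
have cp : Num.conj p = p by case: p_pm1 => ->; rewrite ?rmorph1 ?rmorphN1.
have p_neq0 : p != 0 by case: p_pm1 => ->; rewrite ?oppr_eq0 oner_eq0.
have wP := adj_eigenvector hP Pv cp.
set c := (Num.sqrt 2)%:C^-1.
have cc : Num.conj c = c by rewrite fmorphV; congr (_^-1); exact: conjc_real.
rewrite /corr /rho -mulmxA mxtrace_outer !quench_braket !adjZ cc !adjD adjZ adj1 conjCi.
rewrite !adj_hermitian // scaleNr -!scalemxAl -!scalemxAr !braketZ.
rewrite (braket_sandwich_P Pv wP p_neq0 (anticomm _ AP) PM).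
rewrite (braket_sandwich_1 Pv wP p_neq0 (anticomm _ AP) PM).
apply/esym/sandwich_combination.
- by case: p_pm1 => ->; rewrite ?mulr1 ?mulrNN ?mulr1.
- by rewrite -expr2 sqr_i.
- rewrite /c -invfM -rmorphM -expr2 sqr_sqrtr ?ler0n // rmorph_nat.
  by rewrite -mulr_natr mulVf // pnatr_eq0.
Qed.
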